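(* Let $G$ be a Borel groupoid acting freely on the right of a Borel space $X$ such that the quotient map $q:X\to X/G$ has a Borel cross section. Then $X$ is a proper Borel $G$-space.
   Context: All Borel spaces are analytic. A right Borel $G$-space $X$ has a Borel moment map $s_X:X\to G^{(0)}$ and a Borel action $x\cdot\gamma$ defined when $s_X(x)=r(\gamma)$; it is free if $x\cdot\gamma=x$ implies $\gamma$ is a unit. $X/G$ carries the quotient Borel structure. $X$ is a proper right Borel $G$-space if the transformation groupoid $X\rtimes G=\{(x,\gamma):s_X(x)=r(\gamma)\}$ (with $(x,\gamma)(x\cdot\gamma,\eta)=(x,\gamma\eta)$ and unit space $X$) is a proper Borel groupoid, i.e. there is a family $\{m^x\}_{x\in X}$ of probability measures on $X\rtimes G$, $m^x$ supported on the range fibre over $x$, with $x\mapsto\int f\,dm^x$ Borel for nonnegative Borel $f$ and $g\cdot m^{s(g)}=m^{r(g)}$ for all $g\in X\rtimes G$. *)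

From HB Require Import structures.
From mathcomp Require Import all_boot all_order all_algebra.
From mathcomp Require Import all_classical all_reals all_analysis.
From mathcomp Require Import measurable_realfun.

Set Implicit Arguments.
Unset Strict Implicit.
Unset Printing Implicit Defensive.

Import Order.TTheory GRing.Theory Num.Theory.
Local Open Scope classical_set_scope.
Local Open Scope ring_scope.

Definition polish_space (R : realType) (P : completePseudoMetricType R) : Prop :=
  hausdorff_space P /\ exists D : set P, countable D /\ dense D.

Definition analytic_subset (R : realType) (P : completePseudoMetricType R)
    (A : set P) : Prop :=
  A = set0 \/
  exists (Q : completePseudoMetricType R) (f : Q -> P),
    polish_space Q /\ continuous f /\ range f = A.

(* A Borel space is analytic if it is isomorphic (as a Borel space) to an
   analytic subset of a Polish space with the relative Borel structure. *)
Definition analytic_borel_space d (T : measurableType d) : Prop :=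
  exists (R : realType) (P : completePseudoMetricType R) (e : T -> P),
    [/\ polish_space P, injective e, analytic_subset (range e) &
        forall A : set T, measurable A <->
          exists B : set P, <<s open >> B /\ A = e @^-1` B].

Section Groupoid.
Context d (G : measurableType d) (r s : G -> G) (mul : G -> G -> G)
  (inv : G -> G).

Definition units : set G := [set u | r u = u].
Definition composable : set (G * G) := [set p | s p.1 = r p.2].

Definition is_groupoid : Prop :=
  [/\ (forall g, r (r g) = r g /\ s (r g) = r g /\ r (s g) = s g /\ s (s g) = s g),
      (forall g h, s g = r h -> r (mul g h) = r g /\ s (mul g h) = s h),
      (forall g h k, s g = r h -> s h = r k ->
          mul (mul g h) k = mul g (mul h k)),
      (forall g, mul (r g) g = g /\ mul g (s g) = g) &
      (forall g, r (inv g) = s g /\ s (inv g) = r g /\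
                 mul g (inv g) = r g /\ mul (inv g) g = s g)].

Definition is_borel_groupoid : Prop :=
  is_groupoid /\
  measurable_fun setT r /\ measurable_fun setT s /\ measurable_fun setT inv /\
  measurable units /\ measurable composable /\
  measurable_fun composable (fun p => mul p.1 p.2).

End Groupoid.

Section GSpace.
Context d (G : measurableType d) (r s : G -> G) (mul : G -> G -> G)
  (dX : measure_display) (X : measurableType dX)
  (sX : X -> G) (act : X -> G -> X).

(* the composable pairs of the action, = underlying set of X ⋊ G *)
Definition action_dom : set (X * G) := [set p | sX p.1 = r p.2].

Definition is_right_borel_action : Prop :=
  (forall x, units r (sX x)) /\
  (forall x g, sX x = r g -> sX (act x g) = s g) /\
  (forall x, act x (sX x) = x) /\
  (forall x g h, sX x = r g -> s g = r h ->
      act (act x g) h = act x (mul g h)) /\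
  measurable_fun setT sX /\ measurable action_dom /\
  measurable_fun action_dom (fun p => act p.1 p.2).

Definition free_action : Prop :=
  forall x g, sX x = r g -> act x g = x -> units r g.

Definition orbit (x : X) : set X := [set y | exists g, sX x = r g /\ y = act x g].

Definition orbit_space : Type := {A : set X | exists x, A = orbit x}.

Definition qmap (x : X) : orbit_space :=
  exist (fun A => exists x, A = orbit x) (orbit x) (ex_intro _ x erefl).

Definition quotient_measurable (S : set orbit_space) : Prop :=
  measurable (qmap @^-1` S).

Definition borel_cross_section (c : orbit_space -> X) : Prop :=
  (forall a, qmap (c a) = a) /\
  (forall B : set X, measurable B -> quotient_measurable (c @^-1` B)).

(* In X ⋊ G: r(x,g) = x, s(x,g) = x·g, (x,g)(x·g,h) = (x,gh). *)

Definition range_fibre (x : X) : set (X * G) :=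
  [set p | p.1 = x /\ sX x = r p.2].

(* for the arrow (x,g) of X ⋊ G, the set of arrows h in the range fibre over
   s(x,g) = x·g such that (x,g) h lies in A; (x,g)·m is the measure
   A |-> m (transl_pre x g A) *)
Definition transl_pre (x : X) (g : G) (A : set (X * G)) : set (X * G) :=
  [set p | range_fibre (act x g) p /\ A (x, mul g p.2)].

Definition proper_borel_G_space (R : realType) : Prop :=
  exists m : X -> probability (X * G)%type R,
    [/\ (forall x, m x (range_fibre x) = 1%E),
        (forall f : X * G -> \bar R, (forall p, (0 <= f p)%E) ->
           measurable_fun [set: (X * G)%type] f ->
           measurable_fun setT (fun x => (\int[m x]_p f p)%E)) &
        (forall x g, sX x = r g -> forall A, measurable A ->
           m (act x g) (transl_pre x g A) = m x A)].

End GSpace.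

Arguments borel_cross_section [d G] r [dX X] sX act c.

(* The cross section c picks a base point y x := c (q x) in every orbit; by
   freeness there is a unique arrow phi x with (y x) . (phi x) = x, and
   phi (x . g) = (phi x) g.  Hence the Dirac measures at the arrows
   (x, (phi x)^-1) of X ⋊ G form an invariant system of probability measures
   on the range fibres.  The only analytic input is that phi is Borel: its
   graph is Borel, and a map between analytic Borel spaces with Borel graph is
   Borel by Lusin's separation theorem for Souslin sets, Borel subsets of a
   Polish space being Souslin. *)

From HB Require Import structures.
From mathcomp Require Import all_boot all_order all_algebra.
From mathcomp Require Import all_classical all_reals all_analysis.
From mathcomp Require Import measurable_realfun zify.

Set Implicit Arguments.
Unset Strict Implicit.
Unset Printing Implicit Defensive.

Import Order.TTheory GRing.Theory Num.Theory.
Local Open Scope classical_set_scope.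
Local Open Scope ring_scope.

Section SouslinScheme.
Context {T : topologicalType}.

Definition prefix_invariant (F : nat -> (nat -> nat) -> set T) :=
  forall n s t, (forall j, (j < n)%N -> s j = t j) -> F n s = F n t.

Definition converging_scheme (F : nat -> (nat -> nat) -> set T) :=
  forall s, (forall n, F n s !=set0) -> exists a, (forall n, F n s a) /\
    (forall U, nbhs a U -> exists N, forall n, (N <= n)%N -> F n s `<=` U).

Definition scheme_kernel (F : nat -> (nat -> nat) -> set T) :=
  [set x | exists s, forall n, F n s x].

(* Results of the Souslin operation on schemes whose nonempty branches
   converge; for a Polish space these are exactly its analytic subsets. *)
Definition souslin (A : set T) :=
  exists F, [/\ prefix_invariant F, converging_scheme F & A = scheme_kernel F].

Lemma souslin0 : souslin set0.
Proof.
exists (fun _ _ => set0); split => //.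
- by move=> s /(_ 0%N) [].
- by apply/seteqP; split => x // [s /(_ 0%N)].
Qed.

Lemma souslin_bigcup (A : nat -> set T) : (forall k, souslin (A k)) ->
  souslin (\bigcup_k A k).
Proof.
move=> hA; have [Fs HF] := choice hA.
pose F n (s : nat -> nat) : set T :=
  if n is m.+1 then Fs (s 0%N) m (fun j => s j.+1) else setT.
exists F; split.
- move=> [|m] s t //= st; rewrite (st 0%N) //.
  have [pF _ _] := HF (t 0%N); apply: pF => j jm; exact: st.
- move=> s ne.
  have [_ gF _] := HF (s 0%N).
  have [|a [Fa conv]] := gF (fun j => s j.+1); first by move=> n; exact: (ne n.+1).
  exists a; split; first by case.
  move=> U /conv [N HN]; exists N.+1 => -[//|n] /= Nn; exact: HN.
- apply/seteqP; split => x.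
  + move=> [k _]; have [_ _ ->] := HF k; move=> [s Hs].
    exists (fun j => if j is j'.+1 then s j' else k) => -[//|n] /=; exact: Hs.
  + move=> [s Hs]; exists (s 0%N) => //.
    have [_ _ ->] := HF (s 0%N); exists (fun j => s j.+1) => n; exact: (Hs n.+1).
Qed.

(* the k-th scheme reads its branch along the k-th column of a pairing of nat *)
Definition interleave_scheme (Fs : nat -> nat -> (nat -> nat) -> set T)
    (m : nat) (s : nat -> nat) :=
  [set x | forall k n : nat, (forall j, (j < n)%N -> (pickle (k, j) < m)%N) ->
     Fs k n (fun j => s (pickle (k, j))) x].

Lemma pickle_prefix_bound (k n : nat) : exists M, forall m, (M <= m)%N ->
  forall j, (j < n)%N -> (pickle (k, j) < m)%N.
Proof.
suff [M HM] : exists M, forall j, (j < n)%N -> (pickle (k, j) < M)%N.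
  by exists M => m Mm j jn; apply: leq_trans (HM _ jn) Mm.
elim: n => [|n [M HM]]; first by exists 0%N.
exists (maxn M (pickle (k, n)).+1) => j; rewrite ltnS leq_eqVlt.
by case/orP => [/eqP->|/HM jM]; rewrite leq_max ?leqnn ?orbT ?jM.
Qed.

Section Interleave.
Variable Fs : nat -> nat -> (nat -> nat) -> set T.

Lemma interleave_prefix_invariant : (forall k, prefix_invariant (Fs k)) ->
  prefix_invariant (interleave_scheme Fs).
Proof.
move=> pF m s t st; apply/seteqP; split => x Hx k n Hkn.
- rewrite -(pF k n (fun j => s (pickle (k, j)))); first exact: Hx.
  by move=> j jn; apply: st; apply: Hkn.
- rewrite (pF k n _ (fun j => t (pickle (k, j)))); first exact: Hx.
  by move=> j jn; apply: st; apply: Hkn.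
Qed.

Lemma interleave_converging : hausdorff_space T ->
  (forall k, converging_scheme (Fs k)) ->
  converging_scheme (interleave_scheme Fs).
Proof.
move=> hT gF s ne.
have [af Haf] := choice (fun k => gF k (fun j => s (pickle (k, j))) (fun n =>
  let: ex_intro M HM := pickle_prefix_bound k n in
  let: ex_intro x Fx := ne M in ex_intro _ x (Fx k n (HM M (leqnn M))))).
have eqa k : af k = af 0%N.
  apply: hT => U V nU nV.
  have [N1 H1] := (Haf 0%N).2 _ nV; have [N2 H2] := (Haf k).2 _ nU.
  have [M1 HM1] := pickle_prefix_bound 0 N1.
  have [M2 HM2] := pickle_prefix_bound k N2.
  have [x Fx] := ne (maxn M1 M2); exists x; split.
  + by apply: (H2 N2 (leqnn _)); apply: Fx; apply: HM2; exact: leq_maxr.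
  + by apply: (H1 N1 (leqnn _)); apply: Fx; apply: HM1; exact: leq_maxl.
exists (af 0%N); split; first by move=> m k n _; rewrite -(eqa k); exact: (Haf k).1.
move=> U /(Haf 0%N).2 [N HN]; have [M HM] := pickle_prefix_bound 0 N.
by exists M => m Mm x Fx; apply: (HN N (leqnn _)); apply: Fx; exact: HM.
Qed.

Lemma interleave_scheme_kernel :
  scheme_kernel (interleave_scheme Fs) = \bigcap_k scheme_kernel (Fs k).
Proof.
apply/seteqP; split => x.
- move=> [s Hs] k _; exists (fun j => s (pickle (k, j))) => n.
  by have [M HM] := pickle_prefix_bound k n; apply: (Hs M); exact: HM.
- move=> Hx; have /choice [sf Hsf] : forall k, exists s, forall n, Fs k n s x.
    by move=> k; exact: Hx k I.
  pose t i := if @unpickle (prod nat nat) i is Some (k, j) then sf k j else 0%N.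
  exists t => m k n _.
  have -> : (fun j => t (pickle (k, j))) = sf k.
    by apply/funext => j; rewrite /t pickleK.
  exact: Hsf.
Qed.

End Interleave.

Lemma souslin_bigcap (A : nat -> set T) : hausdorff_space T ->
  (forall k, souslin (A k)) -> souslin (\bigcap_k A k).
Proof.
move=> hT /choice [Fs HF]; exists (interleave_scheme Fs); split.
- by apply: interleave_prefix_invariant => k; have [] := HF k.
- by apply: interleave_converging => // k; have [] := HF k.
- rewrite interleave_scheme_kernel; apply: eq_bigcapr => k _.
  by have [_ _ ->] := HF k.
Qed.

Lemma souslinU (A B : set T) : souslin A -> souslin B -> souslin (A `|` B).
Proof.
move=> sA sB; have -> : A `|` B = \bigcup_k (if k is 0%N then A else B).
  apply/seteqP; split => x.
  - by move=> [Ax|Bx]; [exists 0%N|exists 1%N].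
  - by move=> [[|k] _ H]; [left|right].
by apply: souslin_bigcup => -[|k].
Qed.

Lemma souslinI (A B : set T) : hausdorff_space T ->
  souslin A -> souslin B -> souslin (A `&` B).
Proof.
move=> hT sA sB; have -> : A `&` B = \bigcap_k (if k is 0%N then A else B).
  apply/seteqP; split => x.
  - by move=> [Ax Bx] [|k] _.
  - by move=> H; split; [exact: (H 0%N)|exact: (H 1%N)].
by apply: souslin_bigcap => // -[|k].
Qed.

End SouslinScheme.

Lemma souslin_image (T1 T2 : topologicalType) (f : T1 -> T2) (A : set T1) :
  continuous f -> hausdorff_space T2 -> souslin A -> souslin (f @` A).
Proof.
move=> cf hT [F [pF gF ->]].
exists (fun n s => f @` F n s); split.
- by move=> n s t st; rewrite (pF n s t st).
- move=> s ne; have [|a [Fa conv]] := gF s.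
    by move=> n; have [_ [x Fx _]] := ne n; exists x.
  exists (f a); split; first by move=> n; exists a.
  move=> U nU; have [N HN] := conv _ (cf a U nU).
  by exists N => n Nn _ [x Fx <-]; exact: (HN n Nn x Fx).
- apply/seteqP; split => y.
  + by move=> [x [s Hs] <-]; exists s => n; exists x.
  + move=> [s Hs]; have [|a [Fa conv]] := gF s.
      by move=> n; have [x Fx _] := Hs n; exists x.
    suff -> : y = f a by exists a => //; exists s.
    apply: hT => U V nU nV.
    have [N HN] := conv _ (cf a V nV).
    have [x Fx xy] := Hs N.
    exists y; split; first exact: nbhs_singleton.
    by rewrite -xy; exact: (HN N (leqnn _) x Fx).
Qed.

Lemma souslin_setX (T1 T2 : topologicalType) (A : set T1) (B : set T2) :
  souslin A -> souslin B -> souslin (A `*` B).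
Proof.
move=> [F1 [pF1 gF1 ->]] [F2 [pF2 gF2 ->]].
(* even coordinates of a branch drive the first factor, odd ones the second *)
exists (fun n s => F1 n./2 (fun j => s j.*2) `*` F2 n./2 (fun j => s j.*2.+1)).
split.
- move=> n s t st; rewrite (pF1 n./2 _ (fun j => t j.*2)); last first.
    by move=> j jn; apply: st; lia.
  by rewrite (pF2 n./2 _ (fun j => t j.*2.+1)) // => j jn; apply: st; lia.
- move=> s ne.
  have [|a1 [Fa1 c1]] := gF1 (fun j => s j.*2).
    by move=> n; have [[x y] [/= Fx _]] := ne n.*2; exists x; rewrite doubleK in Fx.
  have [|a2 [Fa2 c2]] := gF2 (fun j => s j.*2.+1).
    by move=> n; have [[x y] [/= _ Fy]] := ne n.*2; exists y; rewrite doubleK in Fy.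
  exists (a1, a2); split; first by move=> n; split.
  move=> W [[P Q] [/= nP nQ] PQW].
  have [N1 H1] := c1 _ nP; have [N2 H2] := c2 _ nQ.
  exists (maxn N1 N2).*2 => n Nn [x y] [/= Fx Fy]; apply: PQW; split => /=.
  + by apply: (H1 n./2) => //; lia.
  + by apply: (H2 n./2) => //; lia.
- apply/seteqP; split => -[x y].
  + move=> [/= [s Hs] [t Ht]].
    exists (fun j => if odd j then t j./2 else s j./2) => n; split => /=.
    * have -> : (fun j => if odd j.*2 then t j.*2./2 else s j.*2./2) = s.
        by apply/funext => j; rewrite odd_double doubleK.
      exact: Hs.
    * have -> : (fun j => if odd j.*2.+1 then t j.*2.+1./2 else s j.*2.+1./2) = t.
        by apply/funext => j; rewrite /= odd_double /= uphalf_double.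
      exact: Ht.
  + move=> [s Hs]; split.
    * by exists (fun j => s j.*2) => n; have [] := Hs n.*2; rewrite doubleK.
    * by exists (fun j => s j.*2.+1) => n; have [] := Hs n.*2; rewrite doubleK.
Qed.

(* K n is a countable closed cover of mesh -> 0 in which every chain with
   the finite intersection property has a point in common, like the covers
   [ball_cover] of a complete metric space by balls around a dense
   sequence. *)
Record closed_cover_scheme (T : topologicalType) (K : nat -> nat -> set T) :
    Prop := {
  cover_scheme_cover : forall n x, exists j, K n j x;
  cover_scheme_complete : forall b,
    (forall n, exists x, forall m, (m <= n)%N -> K m (b m) x) ->
    exists a, forall n, K n (b n) a;
  cover_scheme_fine : forall b a, (forall n, K n (b n) a) ->
    forall U, nbhs a U -> exists N, K N (b N) `<=` U;
  cover_scheme_closed : forall n j, closed (K n j) }.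

Section ClosedCoverScheme.
Context (T : topologicalType) (K : nat -> nat -> set T)
  (hK : closed_cover_scheme K).

Lemma souslin_closed (C : set T) : closed C -> souslin C.
Proof.
move=> cC.
exists (fun n b => C `&` [set x | forall m, (m < n)%N -> K m (b m) x]); split.
- move=> n s t st; apply/seteqP; split => x [Cx Hx]; split => // m mn.
  + by rewrite -st //; exact: Hx.
  + by rewrite st //; exact: Hx.
- move=> b ne.
  have [|a Ha] := cover_scheme_complete hK (b := b).
    by move=> n; have [x [_ Hx]] := ne n.+1; exists x => m mn; apply: Hx.
  have Ca : C a.
    apply/not_notP => nCa.
    have [N HN] := cover_scheme_fine hK Ha
      (open_nbhs_nbhs (conj (closed_openC cC) nCa)).
    by have [x [Cx Hx]] := ne N.+1; exact: (HN x (Hx N (ltnSn _))).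
  exists a; split; first by move=> n; split.
  move=> U /(cover_scheme_fine hK Ha) [N HN].
  by exists N.+1 => n Nn x [_ Hx]; apply: HN; exact: Hx.
- apply/seteqP; split => x; last by move=> [b /(_ 0%N) []].
  move=> Cx; have [b Hb] := choice (fun n => cover_scheme_cover hK n x).
  by exists b => n; split.
Qed.

Lemma souslin_open (U : set T) : open U -> souslin U.
Proof.
move=> oU.
have -> : U = \bigcup_n \bigcup_j
    (if pselect (K n j `<=` U) then K n j else set0).
  apply/seteqP; split => x.
  + move=> Ux; have [b Hb] := choice (fun n => cover_scheme_cover hK n x).
    have [N HN] := cover_scheme_fine hK Hb (open_nbhs_nbhs (conj oU Ux)).
    exists N => //; exists (b N) => //; case: pselect => [_ /=|//]; exact: Hb.
  + by move=> [n _ [j _]]; case: pselect => [KU /KU //|_ []].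
apply: souslin_bigcup => n; apply: souslin_bigcup => j.
case: pselect => [KU|nKU] /=; first exact/souslin_closed/(cover_scheme_closed hK).
exact: souslin0.
Qed.

Lemma borel_souslin (B : set T) : hausdorff_space T -> <<s open >> B ->
  souslin B /\ souslin (~` B).
Proof.
move=> hT; move: B; apply: smallest_sub.
- split.
  + split; first exact: souslin0.
    by rewrite setC0; apply: souslin_closed; exact: closedT.
  + by move=> A [sA sAc]; rewrite setTD setCK.
  + move=> A hA; split; first by apply: souslin_bigcup => n; have [] := hA n.
    by rewrite setC_bigcup; apply: souslin_bigcap => // n; have [] := hA n.
- move=> U oU; split; first exact: souslin_open.
  by apply: souslin_closed; rewrite closedC.
Qed.

Lemma closed_cover_scheme_eq (a b : T) : hausdorff_space T ->
  (forall n, exists j, K n j a /\ K n j b) -> a = b.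
Proof.
move=> hT H; have [bj Hb] := choice H.
apply: hT => A B nA nB.
have [N HN] := cover_scheme_fine hK (fun n => (Hb n).2) nB.
exists a; split; first exact: nbhs_singleton.
exact: HN (Hb N).1.
Qed.

End ClosedCoverScheme.

Lemma polish_dense_seq (R : realType) (P : completePseudoMetricType R) (x0 : P) :
  polish_space P ->
  exists c : nat -> P, forall x (eps : R), 0 < eps -> exists j, ball x eps (c j).
Proof.
move=> [_ [D [cD dD]]]; have [f finj] := countable_injP _ cD.
exists (fun n => if pselect (exists x, D x /\ f x = n) is left h
  then proj1_sig (cid h) else x0).
move=> x eps eps0; have [ox xo] := open_nbhs_ball x (PosNum eps0).
have [y [/interior_subset bxy Dy]] := dD (ball x eps)° (ex_intro _ x xo) ox.
exists (f y); case: pselect => [h|]; last first.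
  by move=> /(_ (ex_intro _ y (conj Dy erefl))).
by case: (cid h) => z [Dz fz] /=; rewrite (finj z y) // inE.
Qed.

Section BallCover.
Context (R : realType) (P : completePseudoMetricType R) (c : nat -> P).
Hypothesis c_dense : forall x (eps : R), 0 < eps -> exists j, ball x eps (c j).

Definition ball_cover n j := closed_ball (c j) (n.+1%:R^-1 / 2).

Let ball_cover_small (eps : R) n i x y : 0 < eps -> n.+1%:R^-1 < eps / 2 ->
  ball_cover n i x -> ball_cover n i y -> ball x eps y.
Proof.
move=> eps0 ne; have e_gt0 : 0 < n.+1%:R^-1 :> R by rewrite invr_gt0 ltr0n.
move=> /(subset_closure_half e_gt0)/ball_sym Kx /(subset_closure_half e_gt0) Ky.
apply: le_ball (ball_triangle Kx Ky).
by rewrite (splitr eps) lerD // ltW.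
Qed.

Let inv_succ_small (eps : R) : 0 < eps -> exists N, N.+1%:R^-1 < eps / 2.
Proof.
move=> eps0; have eps20 : 0 < eps / 2 by rewrite divr_gt0.
have [N _ HN] := near_infty_natSinv_lt (PosNum eps20).
by exists N; apply: (HN N) => /=.
Qed.

Lemma ball_cover_scheme : closed_cover_scheme ball_cover.
Proof.
split.
- move=> n x; have [|j hj] := @c_dense x (n.+1%:R^-1 / 2).
    by rewrite divr_gt0 // invr_gt0 ltr0n.
  by exists j; apply: subset_closure; exact: ball_sym.
- move=> b /choice [xs Hxs].
  have xs_cauchy : cauchy_ex (xs @ \oo).
    move=> eps eps0; have [N HN] := inv_succ_small eps0.
    exists (xs N); exists N => // n /= Nn.
    exact: ball_cover_small eps0 HN (Hxs N N (leqnn N)) (Hxs n N Nn).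
  have cv : cvg (xs @ \oo) by apply: cauchy_cvg; exact: cauchy_exP.
  exists (lim (xs @ \oo)) => n.
  have ev : \forall k \near \oo, ball_cover n (b n) (xs k).
    by exists n => // k /= nk; exact: Hxs.
  exact: (@closed_cvg _ _ _ _ xs _ (@closed_closure _ _) ev _ cv).
- move=> b a Ha U /nbhs_ballP [eps eps0 HU]; have [N HN] := inv_succ_small eps0.
  by exists N => y Ky; apply: HU; exact: ball_cover_small eps0 HN (Ha N) Ky.
- by move=> n j; exact: closed_closure.
Qed.

End BallCover.

Lemma polish_closed_cover_scheme (R : realType) (P : completePseudoMetricType R) :
  polish_space P -> exists K : nat -> nat -> set P, closed_cover_scheme K.
Proof.
move=> pP; have [[x0 _]|nP] := pselect (exists x : P, True).
  have [c c_dense] := polish_dense_seq x0 pP.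
  by exists (ball_cover c); exact: ball_cover_scheme.
exists (fun _ _ => set0); split.
- by move=> n x; exfalso; apply: nP; exists x.
- by move=> b /(_ 0%N) [x _]; exfalso; apply: nP; exists x.
- by move=> b a _; exfalso; apply: nP; exists a.
- by move=> n j; exact: closed0.
Qed.

Section GeneratedSigma.
Context (T : Type) (G : set (set T)).

Lemma g_sigma_setC (A : set T) : <<s G >> A -> <<s G >> (~` A).
Proof. by move=> GA; rewrite -setTD; exact: sigma_algebraCD. Qed.

Lemma g_sigma_bigcap (A : nat -> set T) : (forall k, <<s G >> (A k)) ->
  <<s G >> (\bigcap_k A k).
Proof.
move=> GA; rewrite -(setCK (\bigcap_k A k)) setC_bigcap; apply: g_sigma_setC.
by apply: sigma_algebra_bigcup => k; exact: g_sigma_setC.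
Qed.

End GeneratedSigma.

Section Separation.
Context {T : topologicalType}.
Implicit Types (F G : nat -> (nat -> nat) -> set T) (s t : nat -> nat).

Definition borel_separated (A B : set T) :=
  exists C, <<s open >> C /\ A `<=` C /\ C `&` B = set0.

Lemma borel_separated_bigcup (A B : nat -> set T) :
  (forall k l, borel_separated (A k) (B l)) ->
  borel_separated (\bigcup_k A k) (\bigcup_l B l).
Proof.
move=> h; have [C HC] := choice (fun kl : nat * nat => h kl.1 kl.2).
exists (\bigcup_k \bigcap_l C (k, l)); split.
  apply: sigma_algebra_bigcup => k; apply: g_sigma_bigcap => l.
  by have [] := HC (k, l).
split.
  move=> x [k _ Ax]; exists k => // l _; have [_ [+ _]] := HC (k, l); exact.
apply/seteqP; split => // x [[k _ Cx] [l _ Bx]].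
have [_ [_ CB]] := HC (k, l).
by rewrite -CB; split => //; exact: Cx.
Qed.

Definition subkernel F n s :=
  [set x | exists t, (forall j, (j < n)%N -> t j = s j) /\ forall m, F m t x].

Definition set_at s n k := fun j => if j == n then k else s j.

Lemma subkernel0 F s : subkernel F 0 s = scheme_kernel F.
Proof.
apply/seteqP; split => x; first by move=> [t [_ Ft]]; exists t.
by move=> [t Ft]; exists t.
Qed.

Lemma subkernel_split F n s :
  subkernel F n s = \bigcup_k subkernel F n.+1 (set_at s n k).
Proof.
apply/seteqP; split => x.
- move=> [t [ts Ft]]; exists (t n) => //; exists t; split => // j jn.
  by rewrite /set_at; case: eqP => [->//|jn']; apply: ts; lia.
- move=> [k _ [t [ts Ft]]]; exists t; split => // j jn.
  by rewrite ts; last lia; rewrite /set_at; case: eqP => //; lia.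
Qed.

Lemma subkernel_sub F n s : prefix_invariant F -> subkernel F n s `<=` F n s.
Proof. by move=> pF x [t [ts /(_ n)]]; rewrite (pF n t s). Qed.

Lemma eq_subkernel F n s s' : (forall j, (j < n)%N -> s j = s' j) ->
  subkernel F n s = subkernel F n s'.
Proof.
move=> ss'; apply/seteqP; split => x [t [ts Ft]]; exists t; split => // j jn.
  by rewrite ts // ss'.
by rewrite ts // -ss'.
Qed.

Lemma not_separated_refine F G n s t :
  ~ borel_separated (subkernel F n s) (subkernel G n t) ->
  exists k l, ~ borel_separated (subkernel F n.+1 (set_at s n k))
                                (subkernel G n.+1 (set_at t n l)).
Proof.
move=> nsep; apply/not_notP => /forallNP nkl; apply: nsep.
rewrite (subkernel_split F n s) (subkernel_split G n t).
apply: borel_separated_bigcup => k l; apply/not_notP => nkl'.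
by apply: (nkl k); exists l.
Qed.

Lemma not_separated_branches F G :
  ~ borel_separated (scheme_kernel F) (scheme_kernel G) ->
  exists s t, forall n, ~ borel_separated (subkernel F n s) (subkernel G n t).
Proof.
move=> nsep.
have step (nst : nat * (nat -> nat) * (nat -> nat)) : exists kl : nat * nat,
    let: (n, s, t) := nst in
    ~ borel_separated (subkernel F n s) (subkernel G n t) ->
    ~ borel_separated (subkernel F n.+1 (set_at s n kl.1))
                      (subkernel G n.+1 (set_at t n kl.2)).
  case: nst => [[n s] t].
  have [/not_separated_refine [k [l nkl]]|sep] :=
    pselect (~ borel_separated (subkernel F n s) (subkernel G n t)).
    by exists (k, l).
  by exists (0, 0)%N => /sep.
have [kl Hkl] := choice step.
pose fix st n : (nat -> nat) * (nat -> nat) :=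
  if n is m.+1 then let k := kl (m, (st m).1, (st m).2) in
    (set_at (st m).1 m k.1, set_at (st m).2 m k.2)
  else (fun=> 0%N, fun=> 0%N).
have nst n : ~ borel_separated (subkernel F n (st n).1) (subkernel G n (st n).2).
  elim: n => [|n IH]; first by rewrite !subkernel0.
  exact: (Hkl (n, (st n).1, (st n).2)).
exists (fun j => (st j.+1).1 j), (fun j => (st j.+1).2 j) => n.
have stE j : (j < n)%N ->
    (st n).1 j = (st j.+1).1 j /\ (st n).2 j = (st j.+1).2 j.
  elim: n => [//|n IH] jn /=; rewrite /set_at; case: eqP => [->|jn'].
    by rewrite /= /set_at !eqxx.
  by have [-> ->] := IH ltac:(lia).
rewrite (@eq_subkernel F n _ (st n).1); last by move=> j /stE [].
by rewrite (@eq_subkernel G n _ (st n).2) //; move=> j /stE [].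
Qed.

Lemma souslin_separation (A B : set T) : hausdorff_space T ->
  souslin A -> souslin B -> A `&` B = set0 -> borel_separated A B.
Proof.
move=> hT [F [pF gF eA]] [G [pG gG eB]] AB.
apply/not_notP; rewrite eA eB => /not_separated_branches [s [t nsep]].
have Fne H n : ~ borel_separated (subkernel F n s) H -> F n s !=set0.
  move=> nH; apply/not_notP => F0; apply: nH; exists set0.
  split; first exact: sigma_algebra0.
  split; last by rewrite set0I.
  by move=> x /(subkernel_sub pF) Fx; apply: F0; exists x.
have Gne H n : ~ borel_separated H (subkernel G n t) -> G n t !=set0.
  move=> nH; apply/not_notP => G0; apply: nH; exists setT.
  split; first by have := sigma_algebraCD (@sigma_algebra0 T setT open); rewrite setD0.
  split => //; apply/seteqP; split => // x [_ /(subkernel_sub pG) Gx].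
  by apply: G0; exists x.
have [a [Fa ca]] := gF s (fun n => Fne _ n (nsep n)).
have [b [Gb cb]] := gG t (fun n => Gne _ n (nsep n)).
have ab : a != b.
  apply/eqP => eab; have : (A `&` B) a.
    by rewrite eA eB; split; [exists s|exists t; rewrite eab].
  by rewrite AB.
move: hT; rewrite open_hausdorff => /(_ a b ab) [[U V] /= [aU bV] [oU oV UV]].
have [N1 H1] := ca U (open_nbhs_nbhs (conj oU (set_mem aU))).
have [N2 H2] := cb V (open_nbhs_nbhs (conj oV (set_mem bV))).
apply: (nsep (maxn N1 N2)); exists U; split; first exact: sub_sigma_algebra.
split.
  move=> x /(subkernel_sub pF) Fx; apply: (H1 (maxn N1 N2)) => //.
  exact: leq_maxl.
apply/seteqP; split => // x [Ux /(subkernel_sub pG) Gx].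
have Vx : V x by apply: (H2 (maxn N1 N2)) => //; exact: leq_maxr.
by move/eqP: UV => <-.
Qed.

End Separation.

Lemma prod_hausdorff (T U : topologicalType) :
  hausdorff_space T -> hausdorff_space U -> hausdorff_space (T * U)%type.
Proof.
move=> hT hU [p1 p2] [q1 q2] cl; congr pair.
- apply: hT => A B nA nB.
  have [||[x y] [[/= Ax _] [/= Bx _]]] := cl (A `*` setT) (B `*` setT).
  + by exists (A, setT) => //=; split => //; exact: filterT.
  + by exists (B, setT) => //=; split => //; exact: filterT.
  by exists x.
- apply: hU => A B nA nB.
  have [||[x y] [[/= _ Ay] [/= _ By]]] := cl (setT `*` A) (setT `*` B).
  + by exists (setT, A) => //=; split => //; exact: filterT.
  + by exists (setT, B) => //=; split => //; exact: filterT.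
  by exists y.
Qed.

Definition souslin_embedding d (X : measurableType d) (P : topologicalType)
    (e : X -> P) :=
  [/\ hausdorff_space P, (exists K : nat -> nat -> set P, closed_cover_scheme K),
      injective e, souslin (range e) &
      forall A, measurable A <-> exists B, <<s open >> B /\ A = e @^-1` B].

Lemma analytic_souslin_embedding d (X : measurableType d) :
  analytic_borel_space X ->
  exists (R : realType) (P : completePseudoMetricType R) (e : X -> P),
    souslin_embedding e.
Proof.
move=> [R [P [e [pP einj an hm]]]]; exists R, P, e; split => //.
- by case: pP.
- exact: polish_closed_cover_scheme.
- case: an => [->|[Q [f [pQ [cf <-]]]]]; first exact: souslin0.
  apply: souslin_image => //; first by case: pP.
  have [K hK] := polish_closed_cover_scheme pQ.
  by apply: (souslin_closed hK); exact: closedT.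
Qed.

Section SouslinEmbedding.
Context d (X : measurableType d) (P : topologicalType) (e : X -> P)
  (he : souslin_embedding e).

Lemma measurable_souslin_image (A : set X) : measurable A ->
  souslin (e @` A) /\ souslin (e @` ~` A).
Proof.
have image_preimage B : e @` (e @^-1` B) = B `&` range e.
  apply/seteqP; split => y; first by move=> [x Bx <-]; split => //; exists x.
  by move=> [By [x _ ex]]; exists x => //; rewrite /preimage/= ex.
case: he => hP [K hK] _ sr hm.
move=> /hm [B [bB ->]]; have [sB sBc] := borel_souslin hK hP bB.
by rewrite preimage_setC !image_preimage; split; exact: souslinI.
Qed.

End SouslinEmbedding.

Section ProductEmbedding.
Context d1 d2 (X : measurableType d1) (Y : measurableType d2)
  (P1 P2 : topologicalType) (e1 : X -> P1) (e2 : Y -> P2)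
  (h1 : souslin_embedding e1) (h2 : souslin_embedding e2).

Let E (p : X * Y) : P1 * P2 := (e1 p.1, e2 p.2).

Lemma measurable_prod_souslin_image (W : set (X * Y)) : measurable W ->
  souslin (E @` W) /\ souslin (E @` ~` W).
Proof.
case: (h1) => hP1 _ i1 sr1 _; case: (h2) => hP2 _ i2 sr2 _.
have Einj : injective E by move=> [a b] [a' b'] [/i1 -> /i2 ->].
have imX A B : E @` (A `*` B) = e1 @` A `*` e2 @` B.
  apply/seteqP; split.
  - by move=> _ [[a b] [/= Aa Bb] <-]; split; [exists a|exists b].
  - move=> [y1 y2] [/= [a Aa ea] [b Bb eb]].
    by exists (a, b) => //; rewrite /E /= ea eb.
have image_bigcap (F : nat -> set (X * Y)) :
    E @` (\bigcap_k F k) = \bigcap_k (E @` F k).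
  apply/seteqP; split => y; first by move=> [x Fx <-] k _; exists x => //; exact: Fx.
  move=> H; have [x0 _ e0] := H 0%N I; exists x0 => // k _.
  by have [x Fx ex] := H k I; rewrite -(Einj _ _ (etrans ex (esym e0))).
rewrite measurable_prod_measurableType; move: W; apply: smallest_sub.
- split.
  + rewrite image_set0 setC0; split; first exact: souslin0.
    by rewrite -setXTT imX; exact: souslin_setX.
  + by move=> A [sA sAc]; rewrite setTD setCK.
  + move=> F hF; split.
      by rewrite image_bigcup; apply: souslin_bigcup => n; have [] := hF n.
    rewrite setC_bigcup image_bigcap.
    by apply: souslin_bigcap; [exact: prod_hausdorff|move=> n; have [] := hF n].
- move=> _ [A mA [B mB <-]].
  have [sA sAc] := measurable_souslin_image h1 mA.
  have [sB sBc] := measurable_souslin_image h2 mB.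
  split; first by rewrite imX; exact: souslin_setX.
  have -> : ~` (A `*` B) = (~` A `*` setT) `|` (setT `*` ~` B).
    apply/seteqP; split => -[a b] /=; last by move=> [[/= nA _]|[/= _ nB]] [].
    move=> nAB; have [Aa|nAa] := pselect (A a); last by left.
    by right; split => // Bb; exact: nAB.
  by rewrite image_setU !imX; apply: souslinU; apply: souslin_setX.
Qed.

End ProductEmbedding.

(* Souslin's theorem: the preimages of [B] and of [~` B] are carried by [e1]
   onto disjoint projections of Borel subsets of the graph, hence onto
   Souslin sets, which a Borel set separates. *)
Lemma measurable_fun_graph d1 d2 (X : measurableType d1)
    (Y : measurableType d2) (phi : X -> Y) :
  analytic_borel_space X -> analytic_borel_space Y ->
  measurable [set p : X * Y | p.2 = phi p.1] -> measurable_fun setT phi.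
Proof.
move=> aX aY mG.
have [R1 [P1 [e1 h1]]] := analytic_souslin_embedding aX.
have [R2 [P2 [e2 h2]]] := analytic_souslin_embedding aY.
case: (h1) => hP1 _ i1 _ hm1.
have souslin_preimage B : measurable B -> souslin (e1 @` (phi @^-1` B)).
  move=> mB.
  have mW : measurable ([set p : X * Y | p.2 = phi p.1] `&` (setT `*` B)).
    by apply: measurableI => //; exact: measurableX.
  have [sW _] := measurable_prod_souslin_image h1 h2 mW.
  have fst_cont : continuous (@fst P1 P2) by move=> p; exact: cvg_fst.
  have := souslin_image fst_cont hP1 sW.
  congr souslin; apply/seteqP; split => z.
  - by move=> [_ [[x y] [/= -> [_ /= Bx]] <-] <-]; exists x.
  - by move=> [x Bx <-]; exists (e1 x, e2 (phi x)) => //; exists (x, phi x).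
move=> _ B mB; rewrite setTI.
have [|C [bC [sub dis]]] := souslin_separation hP1 (souslin_preimage B mB)
    (souslin_preimage _ (measurableC mB)).
  apply/seteqP; split => // z [[x Bx <-] [x' nBx' ex]].
  by apply: nBx'; rewrite /preimage/= (i1 _ _ ex).
have -> : phi @^-1` B = e1 @^-1` C.
  apply/seteqP; split => x; first by move=> Bx; apply: sub; exists x.
  move=> Cx; apply/not_notP => nBx.
  have : (C `&` (e1 @` (phi @^-1` (~` B)))) (e1 x) by split => //; exists x.
  by rewrite dis.
by apply/hm1; exists C.
Qed.

Lemma analytic_measurable_fun_eq d (X : measurableType d) d'
    (Z : measurableType d') (D : set Z) (u v : Z -> X) :
  analytic_borel_space X -> measurable D ->
  measurable_fun D u -> measurable_fun D v ->
  measurable (D `&` [set z | u z = v z]).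
Proof.
move=> aX mD mu mv.
have [R [P [e [hP [K hK] einj _ hm]]]] := analytic_souslin_embedding aX.
have mK n j : measurable (e @^-1` K n j).
  apply/hm; exists (K n j); split => //; rewrite -[K n j]setCK.
  apply: g_sigma_setC; apply: sub_sigma_algebra; apply: closed_openC.
  exact: cover_scheme_closed hK n j.
(* u z = v z iff u z and v z lie in a common cell of every cover K n *)
have -> : D `&` [set z | u z = v z] = \bigcap_n \bigcup_j
    ((D `&` u @^-1` (e @^-1` K n j)) `&` (D `&` v @^-1` (e @^-1` K n j))).
  apply/seteqP; split => z.
  - move=> [Dz uv] n _; have [j Kj] := cover_scheme_cover hK n (e (u z)).
    by exists j => //; split; split => //; rewrite /preimage /= -uv.
  - move=> H; have [j _ [[Dz _] _]] := H 0%N I; split => //.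
    apply: einj; apply: (closed_cover_scheme_eq hK hP) => n.
    by have [j' _ [[_ h1] [_ h2]]] := H n I; exists j'.
apply: bigcapT_measurable => n; apply: bigcupT_measurable => j.
by apply: measurableI; [exact: mu|exact: mv].
Qed.

Lemma equivariant_arrows_proper (R : realType) d (G : measurableType d)
    (r : G -> G) (mul : G -> G -> G) dX (X : measurableType dX)
    (sX : X -> G) (act : X -> G -> X) (h : X -> G) :
  measurable_fun setT h -> (forall x, sX x = r (h x)) ->
  (forall x g, sX x = r g -> mul g (h (act x g)) = h x) ->
  proper_borel_G_space r mul sX act R.
Proof.
move=> mh sXh hE; exists (fun x => \d_(x, h x)); split.
- by move=> x; rewrite /= /dirac indicE mem_set.
- move=> f f0 mf.
  have -> : (fun x => (\int[\d_(x, h x)]_p f p)%E) = f \o (fun x => (x, h x)).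
    by apply/funext => x; rewrite integral_dirac // diracT mul1e.
  by apply: measurableT_comp => //; exact: measurable_fun_pair.
- move=> x g xg A mA; rewrite /= /dirac !indicE.
  congr ((_ : bool)%:R%:E); apply/idP/idP.
  + by move=> /set_mem [_ /=]; rewrite hE // => ?; apply/mem_set.
  + move=> /set_mem Ax; apply/mem_set; split; first by split => //=.
    by rewrite /= hE.
Qed.

Section FreeAction.
Context d (G : measurableType d) (r s : G -> G) (mul : G -> G -> G)
  (inv : G -> G) dX (X : measurableType dX) (sX : X -> G) (act : X -> G -> X).
Hypothesis hG : is_groupoid r s mul inv.
Hypothesis hact : is_right_borel_action r s mul sX act.
Hypothesis hfree : free_action r sX act.

Let r_mul g h : s g = r h -> r (mul g h) = r g.
Proof. by move=> gh; case: hG => _ /(_ g h gh) []. Qed.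
Let s_mul g h : s g = r h -> s (mul g h) = s h.
Proof. by move=> gh; case: hG => _ /(_ g h gh) []. Qed.
Let mulA g h k : s g = r h -> s h = r k -> mul (mul g h) k = mul g (mul h k).
Proof. by case: hG => _ _ A _ _; exact: A. Qed.
Let mul_r g : mul (r g) g = g.
Proof. by case: hG => _ _ _ /(_ g) []. Qed.
Let mul_s g : mul g (s g) = g.
Proof. by case: hG => _ _ _ /(_ g) []. Qed.
Let r_inv g : r (inv g) = s g.
Proof. by case: hG => _ _ _ _ /(_ g) []. Qed.
Let s_inv g : s (inv g) = r g.
Proof. by case: hG => _ _ _ _ /(_ g) [_ []]. Qed.
Let mulV g : mul g (inv g) = r g.
Proof. by case: hG => _ _ _ _ /(_ g) [_ [_ []]]. Qed.
Let mulVg g : mul (inv g) g = s g.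
Proof. by case: hG => _ _ _ _ /(_ g) [_ [_ [_ ->]]]. Qed.

Let sX_unit x : r (sX x) = sX x. Proof. by case: hact => /(_ x). Qed.
Let sX_act x g : sX x = r g -> sX (act x g) = s g.
Proof. by case: hact => _ [+ _]; exact. Qed.
Let act_sX x : act x (sX x) = x. Proof. by case: hact => _ [_ [+ _]]. Qed.
Let actA x g h : sX x = r g -> s g = r h ->
  act (act x g) h = act x (mul g h).
Proof. by case: hact => _ [_ [_ [+ _]]]; exact. Qed.

Lemma mul_inv_mul a g : s a = r g -> mul g (inv (mul a g)) = inv a.
Proof.
move=> ag; set t := mul g (inv (mul a g)).
have gk : s g = r (inv (mul a g)) by rewrite r_inv s_mul.
have at_r : mul a t = r a by rewrite -mulA // mulV r_mul.
have a_t : s a = r t by rewrite r_mul.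
rewrite -[LHS]mul_r -a_t -mulVg mulA ?s_inv // at_r.
by rewrite -[in X in mul _ X]s_inv mul_s.
Qed.

Lemma free_act_inj x g g' : sX x = r g -> sX x = r g' ->
  act x g = act x g' -> g = g'.
Proof.
move=> xg xg' e.
have sgg' : s g' = s g by rewrite -(sX_act xg) -(sX_act xg') e.
have g'V : s g' = r (inv g) by rewrite r_inv.
have u_unit : units r (mul g' (inv g)).
  apply: (hfree (x := x)); first by rewrite r_mul.
  by rewrite -actA // -e actA // mulV -xg.
rewrite -[RHS]mul_s sgg' -mulVg -(mulA g'V (s_inv g)).
by rewrite -u_unit r_mul // -xg' xg mul_r.
Qed.

Lemma orbit_act x g : sX x = r g -> orbit r sX act (act x g) = orbit r sX act x.
Proof.
move=> xg; apply/seteqP; split => z [k [hk ->]].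
- have gk : s g = r k by rewrite -(sX_act xg).
  by exists (mul g k); split; [rewrite r_mul|exact: actA].
- have gi : s g = r (inv g) by rewrite r_inv.
  have ik : s (inv g) = r k by rewrite s_inv -xg.
  exists (mul (inv g) k); split; first by rewrite (sX_act xg) r_mul // r_inv.
  by rewrite (actA xg) ?r_mul // -mulA // mulV -xg hk mul_r.
Qed.

Lemma qmap_act x g : sX x = r g -> qmap r sX act (act x g) = qmap r sX act x.
Proof. by move=> xg; apply: eq_exist; exact: orbit_act. Qed.

Section CrossSection.
Variable c : orbit_space r sX act -> X.
Hypothesis hc : borel_cross_section r sX act c.

Definition base_point x := c (qmap r sX act x).
Local Notation y := base_point.

Lemma cross_section_coordinate :
  exists phi : X -> G, forall x, sX (y x) = r (phi x) /\ act (y x) (phi x) = x.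
Proof.
suff /choice [phi hphi] : forall x, exists g, sX (y x) = r g /\ act (y x) g = x.
  by exists phi.
move=> x; have : orbit r sX act x x by exists (sX x); rewrite sX_unit act_sX.
have /(congr1 sval) /= <- : qmap r sX act (y x) = qmap r sX act x.
  by case: hc => + _; apply.
by move=> [g [yg /esym xE]]; exists g.
Qed.

Variable phi : X -> G.
Hypothesis hphi : forall x, sX (y x) = r (phi x) /\ act (y x) (phi x) = x.

Lemma coordinate_act x g : sX x = r g -> phi (act x g) = mul (phi x) g.
Proof.
move=> xg; have [h1 h2] := hphi x; have [k1 k2] := hphi (act x g).
have yE : y (act x g) = y x by rewrite /y qmap_act.
have sg : s (phi x) = r g by rewrite -(sX_act h1) h2.
apply: (@free_act_inj (y x)); [by rewrite -yE|by rewrite r_mul|].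
by rewrite -(actA h1 sg) h2 -{1}yE k2.
Qed.

Lemma coordinate_range x : sX x = r (inv (phi x)).
Proof. by have [yphi yphix] := hphi x; rewrite r_inv -(sX_act yphi) yphix. Qed.

Lemma coordinate_inv_act x g : sX x = r g ->
  mul g (inv (phi (act x g))) = inv (phi x).
Proof.
move=> xg; rewrite coordinate_act // mul_inv_mul //.
by have [yphi yphix] := hphi x; rewrite -(sX_act yphi) yphix.
Qed.

Lemma measurable_coordinate : analytic_borel_space G ->
  analytic_borel_space X -> measurable_fun setT r -> measurable_fun setT phi.
Proof.
move=> aG aX mr; case: hact => _ [_ [_ [_ [msX [mdom mact]]]]].
have my : measurable_fun setT y.
  by move=> _ B mB; rewrite setTI; case: hc => _; exact.
pose E := setT `&` [set p : X * G | sX (y p.1) = r p.2].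
have mE : measurable E.
  apply: analytic_measurable_fun_eq => //.
  - by apply: measurableT_comp => //; exact: measurableT_comp.
  - exact: measurableT_comp.
have mu : measurable_fun E (fun p => act (y p.1) p.2).
  change (measurable_fun E
    ((fun p : X * G => act p.1 p.2) \o (fun p => (y p.1, p.2)))).
  apply: (measurable_comp mdom) => //; first by move=> _ [p [_ /= Ep] <-].
  apply: (measurable_funS measurableT) => //.
  by apply: measurable_fun_pair => //; exact: measurableT_comp.
apply: measurable_fun_graph => //.
have := analytic_measurable_fun_eq aX mE mu
  (measurable_funS measurableT (@subsetT _ E) (@measurable_fst _ _ X G)).
(* the graph of phi is where y x . g = x, by freeness *)
congr measurable; apply/seteqP; split => -[x g] /=.
- move=> [[_ /= yg] ygx]; have [yphi yphix] := hphi x.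
  by apply: (@free_act_inj (y x)) => //; rewrite ygx yphix.
- by move=> ->; have [yphi yphix] := hphi x.
Qed.

End CrossSection.
End FreeAction.

Theorem lemma3p4 (R : realType)
  (d : measure_display) (G : measurableType d)
  (r s : G -> G) (mul : G -> G -> G) (inv : G -> G)
  (dX : measure_display) (X : measurableType dX)
  (sX : X -> G) (act : X -> G -> X) :
  analytic_borel_space G -> analytic_borel_space X ->
  is_borel_groupoid r s mul inv ->
  is_right_borel_action r s mul sX act ->
  free_action r sX act ->
  (exists c, borel_cross_section r sX act c) ->
  proper_borel_G_space r mul sX act R.
Proof.
move=> aG aX [hG [mr [_ [minv _]]]] hact hfree [c hc].
have [phi hphi] := cross_section_coordinate hact hc.
have mphi := measurable_coordinate hG hact hfree hc hphi aG aX mr.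
apply: (@equivariant_arrows_proper R _ _ _ _ _ _ _ _ (inv \o phi)).
- exact: measurableT_comp minv mphi.
- exact: (coordinate_range hG hact hphi).
- exact: (coordinate_inv_act hG hact hfree hphi).
Qed.
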